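(* For every $I\in\{0,1\}^{n\times m}$ there exists $\mathcal{F}\subseteq\mathcal{B}_{\mathcal{E}}(I)$ with $|\mathcal{F}|=\mathrm{rank}_\mathrm{B}(I)$ such that $A_{\mathcal{F}}\circ B_{\mathcal{F}}=I$.
   Context: $(A\circ B)_{ij}=\max_l\min(A_{il},B_{lj})$ is the Boolean product; $\mathrm{rank}_\mathrm{B}(I)$ is the least $k$ with $I=A\circ B$ for some $A\in\{0,1\}^{n\times k}$, $B\in\{0,1\}^{k\times m}$. With $X=\{1,\dots,n\}$, $Y=\{1,\dots,m\}$ and for $C\subseteq X$, $D\subseteq Y$: $C^{\uparrow}=\{j\mid \forall i\in C: I_{ij}=1\}$, $D^{\downarrow}=\{i\mid \forall j\in D: I_{ij}=1\}$; $\mathcal{B}(I)=\{\langle C,D\rangle\mid C^\uparrow=D, D^\downarrow=C\}$ ordered by inclusion of first components; $\gamma(i)=\langle\{i\}^{\uparrow\downarrow},\{i\}^\uparrow\rangle$, $\mu(j)=\langle\{j\}^\downarrow,\{j\}^{\downarrow\uparrow}\rangle$, $\mathcal{I}_{ij}=\{c\in\mathcal{B}(I)\mid\gamma(i)\leq c\leq\mu(j)\}$. $\mathcal{E}(I)_{ij}=1$ iff $\mathcal{I}_{ij}$ is non-empty and minimal w.r.t. $\subseteq$ among the non-empty sets $\mathcal{I}_{i'j'}$, and $\mathcal{B}_{\mathcal{E}}(I)=\bigcup\{\mathcal{I}_{ij}\mid \mathcal{E}(I)_{ij}=1\}$. For $\mathcal{F}=\{\langle C_1,D_1\rangle,\dots,\langle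 C_p,D_p\rangle\}\subseteq\mathcal{B}(I)$, $(A_{\mathcal{F}})_{il}=1$ iff $i\in C_l$ and $(B_{\mathcal{F}})_{lj}=1$ iff $j\in D_l$. *)

From mathcomp Require Import all_boot matrix.
Set Implicit Arguments. Unset Strict Implicit. Unset Printing Implicit Defensive.
Local Open Scope ring_scope.

Definition bprod n k m (A : 'M[bool]_(n, k)) (B : 'M[bool]_(k, m)) : 'M[bool]_(n, m) :=
  \matrix_(i < n, j < m) [exists l : 'I_k, A i l && B l j].

Definition bfact n m (I : 'M[bool]_(n, m)) (k : nat) : bool :=
  [exists A : 'M[bool]_(n, k), exists B : 'M[bool]_(k, m), bprod A B == I].

Lemma bfact_n n m (I : 'M[bool]_(n, m)) : exists k, bfact I k.
Proof.
exists n; apply/existsP; exists (\matrix_(i < n, l < n) (i == l)).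
apply/existsP; exists I; apply/eqP/matrixP => i j; rewrite !mxE.
apply/existsP/idP => [[l /andP[]]|H]; first by rewrite mxE => /eqP ->.
by exists i; rewrite mxE eqxx H.
Qed.

Definition brank n m (I : 'M[bool]_(n, m)) : nat := ex_minn (bfact_n I).

Section Concepts.
Variables (n m : nat) (I : 'M[bool]_(n, m)).

Definition up (C : {set 'I_n}) : {set 'I_m} := [set j | [forall i in C, I i j]].
Definition down (D : {set 'I_m}) : {set 'I_n} := [set i | [forall j in D, I i j]].

Definition concept := ({set 'I_n} * {set 'I_m})%type.

Definition concepts : {set concept} :=
  [set c : concept | (up c.1 == c.2) && (down c.2 == c.1)].

Definition cle (c d : concept) : bool := c.1 \subset d.1.

Definition gam (i : 'I_n) : concept := (down (up [set i]), up [set i]).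
Definition mu (j : 'I_m) : concept := (down [set j], up (down [set j])).

Definition Iint (i : 'I_n) (j : 'I_m) : {set concept} :=
  [set c in concepts | cle (gam i) c && cle c (mu j)].

Definition Emat : 'M[bool]_(n, m) :=
  \matrix_(i < n, j < m)
    ((Iint i j != set0) &&
     [forall i' : 'I_n, forall j' : 'I_m,
        (Iint i' j' != set0) ==> ~~ (Iint i' j' \proper Iint i j)]).

Definition BE : {set concept} := \bigcup_(ij : 'I_n * 'I_m | Emat ij.1 ij.2) Iint ij.1 ij.2.

Definition AF (F : {set concept}) : 'M[bool]_(n, #|F|) :=
  \matrix_(i < n, l < #|F|) (i \in (enum_val l).1).
Definition BF (F : {set concept}) : 'M[bool]_(#|F|, m) :=
  \matrix_(l < #|F|, j < m) (j \in (enum_val l).2).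

End Concepts.

(* Take a factorization I = A o B with rank_B(I) columns and replace the l-th
   column of A by the concept generated by its support.  The interval
   [Iint i j] is non-empty iff I_ij = 1, and then a column l of A witnessing
   I_ij = 1 generates a concept lying in [Iint i j].  Since every non-empty
   interval contains an essential one, the generated concepts that lie in
   B_E(I) still cover every 1-entry of I.  So at most rank_B(I) concepts of
   B_E(I) factorize I, and by minimality of the rank exactly rank_B(I). *)
From mathcomp Require Import all_boot matrix.

Set Implicit Arguments. Unset Strict Implicit. Unset Printing Implicit Defensive.

Lemma brank_fact n m (I : 'M[bool]_(n, m)) : bfact I (brank I).
Proof. by rewrite /brank; case: ex_minnP. Qed.

Lemma brank_min n m (I : 'M[bool]_(n, m)) k : bfact I k -> brank I <= k.
Proof. by rewrite /brank; case: ex_minnP => r _; apply. Qed.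

Section Concepts.
Variables (n m : nat) (I : 'M[bool]_(n, m)).

Lemma sub_down_up (C : {set 'I_n}) : C \subset down I (up I C).
Proof.
apply/subsetP => i iC; rewrite inE; apply/forall_inP => j; rewrite inE.
by move/forall_inP; apply.
Qed.

Lemma up_subset (C C' : {set 'I_n}) : C \subset C' -> up I C' \subset up I C.
Proof.
move=> /subsetP sCC'; apply/subsetP => j; rewrite !inE => /forall_inP Ij.
by apply/forall_inP => i /sCC'; apply: Ij.
Qed.

Lemma down_subset (D D' : {set 'I_m}) : D \subset D' -> down I D' \subset down I D.
Proof.
move=> /subsetP sDD'; apply/subsetP => i; rewrite !inE => /forall_inP Ii.
by apply/forall_inP => j /sDD'; apply: Ii.
Qed.

Lemma subset_down1 (C : {set 'I_n}) j : (C \subset down I [set j]) = (j \in up I C).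
Proof.
rewrite inE; apply/subsetP/forall_inP => [sC i /sC | Cj i iC].
  by rewrite inE => /forall_inP; apply; rewrite inE.
by rewrite inE; apply/forall_inP => j'; rewrite inE => /eqP ->; apply: Cj.
Qed.

Definition concept_gen (C : {set 'I_n}) : concept n m := (down I (up I C), up I C).

Lemma concept_gen_concept C : concept_gen C \in concepts I.
Proof.
rewrite inE /= eqxx andbT eqEsubset up_subset ?sub_down_up //=.
apply/subsetP => j Cj; rewrite inE; apply/forall_inP => i; rewrite inE.
by move/forall_inP; apply.
Qed.

Lemma concept_entry (c : concept n m) i j :
  c \in concepts I -> i \in c.1 -> j \in c.2 -> I i j.
Proof. by rewrite inE => /andP[/eqP <- _] iC; rewrite inE => /forall_inP; apply. Qed.

Lemma mem_Iint i j (c : concept n m) :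
  (c \in Iint I i j) = [&& c \in concepts I, i \in c.1 & j \in c.2].
Proof.
rewrite inE /cle /=; have [cC | //] := boolP (c \in concepts I).
move: (cC); rewrite inE => /andP[/eqP c2 /eqP c1].
rewrite /= subset_down1 c2; congr (_ && _); apply/idP/idP => [gi | ic].
  by rewrite (subsetP gi) // (subsetP (sub_down_up _)) ?set11.
by rewrite -c1 -c2 down_subset // up_subset // sub1set.
Qed.

Lemma Iint_neq0 i j : (Iint I i j != set0) = I i j.
Proof.
apply/set0Pn/idP => [[c] | Iij]; first by rewrite mem_Iint => /and3P[]; apply: concept_entry.
exists (gam I i); rewrite mem_Iint concept_gen_concept /=.
rewrite (subsetP (sub_down_up _)) ?set11 //= inE.
by apply/forall_inP => i'; rewrite inE => /eqP ->.
Qed.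

Lemma Emat_entry i j : Emat I i j -> I i j.
Proof. by rewrite mxE -Iint_neq0 => /andP[]. Qed.

(* An interval of minimal cardinality among the non-empty ones inside I_ij is
   minimal for inclusion, i.e. essential. *)
Lemma Emat_subset_Iint i j : I i j ->
  exists2 p : 'I_n * 'I_m, Emat I p.1 p.2 & Iint I p.1 p.2 \subset Iint I i j.
Proof.
rewrite -Iint_neq0 => Iij.
pose P (p : 'I_n * 'I_m) := (Iint I p.1 p.2 != set0) && (Iint I p.1 p.2 \subset Iint I i j).
have Pij : P (i, j) by rewrite /P Iij subxx.
case: (arg_minnP (fun p => #|Iint I p.1 p.2|) Pij) => p /andP[p0 pij] pmin.
exists p => //; rewrite mxE p0; apply/forallP => i'; apply/forallP => j'.
apply/implyP => i'j'0; apply/negP => ltp.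
have /pmin : P (i', j') by rewrite /P i'j'0 (subset_trans (proper_sub ltp)).
by rewrite leqNgt proper_card.
Qed.

Lemma concept_gen_col_Iint k (A : 'M[bool]_(n, k)) (B : 'M[bool]_(k, m)) i j :
  bprod A B = I -> I i j ->
  exists l, concept_gen [set i' | A i' l] \in Iint I i j.
Proof.
move=> AB Iij; move: Iij; rewrite -{1}AB mxE => /existsP[l /andP[Ail Blj]].
exists l.
rewrite mem_Iint concept_gen_concept (subsetP (sub_down_up _)) ?inE //=.
by apply/forall_inP => i'; rewrite inE -AB mxE => Ai'l; apply/existsP; exists l; rewrite Ai'l.
Qed.

Lemma bprod_AF_BF (F : {set concept n m}) :
  F \subset concepts I ->
  (forall i j, I i j -> exists2 c, c \in F & (i \in c.1) && (j \in c.2)) ->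
  bprod (AF F) (BF F) = I.
Proof.
move=> /subsetP FC Fcover; apply/matrixP => i j; rewrite !mxE.
apply/existsP/idP => [[l] | /Fcover[c cF /andP[ic jc]]].
  by rewrite !mxE => /andP; case; apply: concept_entry (FC _ (enum_valP l)).
by exists (enum_rank_in cF c); rewrite !mxE enum_rankK_in // ic jc.
Qed.

Lemma BE_cover k (A : 'M[bool]_(n, k)) (B : 'M[bool]_(k, m)) i j :
  bprod A B = I -> I i j ->
  exists2 c, c \in [set concept_gen [set i' | A i' l] | l : 'I_k] :&: BE I
           & (i \in c.1) && (j \in c.2).
Proof.
move=> AB /Emat_subset_Iint[p Ep sub_ij].
have [l cp] := concept_gen_col_Iint AB (Emat_entry Ep).
exists (concept_gen [set i' | A i' l]).
  by rewrite inE; apply/andP; split; [apply/imsetP; exists l | apply/bigcupP; exists p].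
by move: (subsetP sub_ij _ cp); rewrite mem_Iint => /and3P[_ -> ->].
Qed.

End Concepts.

Theorem theorem5 (n m : nat) (I : 'M[bool]_(n, m)) :
  exists F : {set concept n m},
    [/\ F \subset BE I, #|F| = brank I & bprod (AF F) (BF F) = I].
Proof.
have /existsP[A /existsP[B /eqP AB]] := brank_fact I.
set F := [set concept_gen I [set i | A i l] | l : 'I_(brank I)] :&: BE I.
have FC : F \subset concepts I.
  by apply/subsetP => c /setIP[/imsetP[l _ ->] _]; apply: concept_gen_concept.
have FI : bprod (AF F) (BF F) = I by apply: bprod_AF_BF => // i j /(BE_cover AB).
exists F; split => //; first exact: subsetIr.
apply/eqP; rewrite eqn_leq brank_min ?andbT; last first.
  by apply/existsP; exists (AF F); apply/existsP; exists (BF F); rewrite FI.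
rewrite -[leqRHS]card_ord (leq_trans (subset_leq_card (subsetIl _ _))) //.
exact: leq_imset_card.
Qed.
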